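(* Let $\mathfrak{F}'$ be the set of maximal elements of $\mathfrak{F}\setminus\{\mathcal{F}_\infty\}$ and $\mathfrak{F}''$ the set of maximal elements of $\mathfrak{F}\setminus(\mathfrak{F}'\cup\{\mathcal{F}_\infty\})$. For a nonempty finite set $E\subseteq\mathbb{N}$, the filter $\mathcal{F}_E$ belongs to $\mathfrak{F}''$ if and only if one of the following holds: (1) there is an odd prime $p$ with $p\in\Pi_E$ and $A_E=\{2,p\}$; (2) there are two distinct odd primes $p,q$ with $A_E=\{2,p,q\}$ and $\Pi_E\subseteq\{2\}$.
   Context: $\mathbb{N}=\{1,2,\dots\}$, $\mathbb{N}_0=\{0\}\cup\mathbb{N}$, $\Pi$ the set of primes, $\Pi_z$ the set of prime divisors of $z$. The Kirch topology $\tau_K$ on $\mathbb{N}$ is generated by the base of all $a+b\mathbb{N}_0=\{a+bn:n\in\mathbb{N}_0\}$ with $a,b\in\mathbb{N}$ coprime and $b$ square-free. Closures $\overline{U}$ are in $\tau_K$; $\tau_x=\{U\in\tau_K:x\in U\}$. For finite $E\subseteq\mathbb{N}$, $\mathcal{F}_E=\{B\subseteq\mathbb{N}:\exists (U_x)_{x\in E}\in\prod_{x\in E}\tau_x\ (\bigcap_{x\in E}\overline{U_x}\subseteq B)\}$ (with $\mathcal{F}_\emptyset=\{\mathbb{N}\}$); $\mathcal{F}_\infty=\{B\subseteq\mathbb{N}:\exists n\in\mathbb{N}\ \exists U_1,\dots,U_n\in\tau_K\setminus\{\emptyset\}\ (\overline{U_1}\cap\dots\cap\overline{U_n}\subseteq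 B)\}$; $\mathfrak{F}=\{\mathcal{F}_E:E\subseteq\mathbb{N}\text{ finite}\}\cup\{\mathcal{F}_\infty\}$, ordered by inclusion. For nonempty finite $E$: $\Pi_E=\bigcap_{z\in E}\Pi_z$ and $A_E=\{p\in\Pi:\exists k\in\mathbb{N}\ (E\subseteq p\mathbb{Z}\cup(k+p\mathbb{Z}))\}$. *)

From mathcomp Require Import all_boot.
Set Implicit Arguments. Unset Strict Implicit. Unset Printing Implicit Defensive.

(* subsets of nat (only positive elements are meaningful) *)
Definition pset := nat -> Prop.

Definition subN (B : pset) : Prop := forall x, B x -> 0 < x.

Definition squarefree (b : nat) : Prop :=
  forall p, prime p -> ~ (p * p %| b).

Definition arprog (a b : nat) : pset := fun x => exists n, x = a + b * n.

(* basic open sets of the Kirch topology *)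
Definition kbase (a b : nat) : Prop :=
  0 < a /\ 0 < b /\ coprime a b /\ squarefree b.

Definition kopen (U : pset) : Prop :=
  forall x, U x -> exists a b, kbase a b /\ arprog a b x /\
    (forall y, arprog a b y -> U y).

Definition kclosure (U : pset) : pset := fun x =>
  0 < x /\ forall V, kopen V -> V x -> exists y, V y /\ U y.

Definition filt := pset -> Prop.

Definition FE (E : seq nat) : filt := fun B =>
  subN B /\
  exists U : nat -> pset,
    (forall x, x \in E -> kopen (U x) /\ U x x) /\
    (forall y, 0 < y -> (forall x, x \in E -> kclosure (U x) y) -> B y).

Definition Finf : filt := fun B =>
  subN B /\
  exists (n : nat) (U : nat -> pset), 0 < n /\
    (forall i, i < n -> kopen (U i) /\ exists z, U i z) /\
    (forall y, 0 < y -> (forall i, i < n -> kclosure (U i) y) -> B y).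

Definition fle (F G : filt) : Prop := forall B, F B -> G B.
Definition feq (F G : filt) : Prop := fle F G /\ fle G F.
Definition flt (F G : filt) : Prop := fle F G /\ ~ fle G F.

Definition inFrak (G : filt) : Prop :=
  (exists E : seq nat, all (fun x => 0 < x) E /\ feq G (FE E)) \/ feq G Finf.

Definition Frak1 (G : filt) : Prop :=
  inFrak G /\ ~ feq G Finf /\
  forall H, inFrak H -> ~ feq H Finf -> ~ flt G H.

Definition Frak2 (G : filt) : Prop :=
  inFrak G /\ ~ feq G Finf /\ ~ Frak1 G /\
  forall H, inFrak H -> ~ feq H Finf -> ~ Frak1 H -> ~ flt G H.

Definition PiE (E : seq nat) (p : nat) : Prop :=
  prime p /\ forall z, z \in E -> p %| z.

Definition AE (E : seq nat) (p : nat) : Prop :=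
  prime p /\ exists k, 0 < k /\
    forall z, z \in E -> (p %| z) \/ z = k %[mod p].

(* For a prime p let adh E p be the set of y with p | y or y = z (mod p) for
   every z in E prime to p.  The sets {y | y in adh E p for all p in P}, P a
   finite set of primes, form a base of F_E, so F_E is coarser than F_D iff
   adh D p is contained in adh E p for every p.  For p = 2 this set is
   everything; for odd p it is everything (E is p-full: p in Pi_E), or pN
   (E is p-null: p not in A_E), or pN u (k + pN) for a single class k
   (E is p-mid), and such sets with different k are incomparable.  Moreover
   F_oo = F_{1,2,3} is the filter that is null at every odd prime.  Hence F'
   consists of the F_E that are mid at exactly one odd prime and null at the
   others, and F'' of those that are full at one odd prime or mid at two, and
   null at the others.  Maximality is tested against the progressions
   {k, k+m, k+2m}, which are mid with class k at the odd primes dividing m and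
   null at the other odd primes. *)

From mathcomp Require Import all_boot.
From Stdlib Require Import Classical ClassicalEpsilon.
Set Implicit Arguments. Unset Strict Implicit. Unset Printing Implicit Defensive.

Local Notation all_pos s := (all (fun x => 0 < x) s).

(** * Squarefree moduli *)

Lemma modnDM_dvd a b n p : p %| b -> a + b * n = a %[mod p].
Proof. by case/dvdnP=> c ->; rewrite addnC mulnAC modnMDl. Qed.

Lemma eq_mod_dvdn p x y : x = y %[mod p] -> (p %| x) = (p %| y).
Proof. by rewrite /dvdn => ->. Qed.

Lemma squarefree_gt0 b : squarefree b -> 0 < b.
Proof. by case: b => // /(_ 2 isT); rewrite dvdn0. Qed.

Lemma squarefree1 : squarefree 1.
Proof. by move=> q qp; rewrite dvdn1 muln_eq1 andbb => /eqP q1; rewrite q1 in qp. Qed.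

Lemma squarefree_prime p : prime p -> squarefree p.
Proof.
move=> pp q qp; have [-> | qNp] := eqVneq q p.
  by rewrite -[X in _ %| X]muln1 dvdn_pmul2l ?prime_gt0 // dvdn1 gtn_eqF ?prime_gt1.
by move/(dvdn_trans (dvdn_mulr q (dvdnn q))); rewrite dvdn_prime2 // (negbTE qNp).
Qed.

Lemma squarefreeM_prime b p : squarefree b -> prime p -> ~~ (p %| b) ->
  squarefree (b * p).
Proof.
move=> sb pp pNb q qp; have [-> | qNp] := eqVneq q p.
  by rewrite dvdn_pmul2r ?prime_gt0 //; apply/negP.
have cqp : coprime (q * q) p by rewrite coprimeMl prime_coprime // dvdn_prime2 // qNp.
by rewrite Gauss_dvdl //; exact: sb.
Qed.

Lemma squarefree_dvdn g m : squarefree g ->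
  (forall p, prime p -> p %| g -> p %| m) -> g %| m.
Proof.
move=> sg gm; apply/dvdn_partP => [|p]; first exact: squarefree_gt0.
rewrite mem_primes p_part => /and3P [pp _ pg].
have : logn p g < 2.
  by rewrite ltnNge -pfactor_dvdn ?squarefree_gt0 //; apply/negP; exact: sg.
by case: (logn p g) => [|[|//]] _; [exact: dvd1n | rewrite expn1; exact: gm].
Qed.

Lemma eq_mod_squarefree g x y : squarefree g ->
  (forall p, prime p -> p %| g -> x = y %[mod p]) -> x = y %[mod g].
Proof.
move=> sg; wlog yx : x y / y <= x => [wlog_yx xy | xy].
  have [yx|/ltnW yx] := leqP y x; first exact: wlog_yx.
  by apply/esym/wlog_yx => // p pp pg; rewrite (xy p pp pg).
apply/eqP; rewrite eqn_mod_dvd //; apply: squarefree_dvdn => // p pp pg.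
by rewrite -eqn_mod_dvd // (xy p pp pg).
Qed.

Lemma squarefree_coprime_multiple (P : seq nat) x : exists b,
  [/\ squarefree b, coprime x b & forall p, p \in P -> prime p -> ~~ (p %| x) -> p %| b].
Proof.
elim: P => [|p P [b [sb cxb Pb]]].
  by exists 1; split; [exact: squarefree1 | exact: coprimen1 |].
have [/and3P [pp pNx pNb] | pP] := boolP [&& prime p, ~~ (p %| x) & ~~ (p %| b)].
  exists (b * p); split; first exact: squarefreeM_prime.
    by rewrite coprimeMr cxb coprime_sym prime_coprime.
  move=> q; rewrite inE => /predU1P [-> _ _ | qP qp qNx]; first exact: dvdn_mull.
  exact/dvdn_mulr/Pb.
exists b; split => // q; rewrite inE => /predU1P [-> qp qNx | ]; last exact: Pb.
by apply/negPn; move: pP; rewrite qp qNx.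
Qed.

(** * Closures of progressions in the Kirch topology *)

Lemma arprog_self a b : arprog a b a.
Proof. by exists 0; rewrite muln0 addn0. Qed.

Lemma arprog_of_mod a b w : 0 < b -> a <= w -> w = a %[mod b] -> arprog a b w.
Proof.
move=> b_gt0 aw /eqP; rewrite eqn_mod_dvd // => /dvdnP [k Hk].
by exists k; rewrite mulnC -Hk subnKC.
Qed.

Lemma coprime_arprog a b n : coprime a b -> coprime (a + b * n) b.
Proof. by move=> cab; rewrite -coprime_modl modnDM_dvd // coprime_modl. Qed.

Lemma kopen_arprog a b : kbase a b -> kopen (arprog a b).
Proof.
move=> [a_gt0 [b_gt0 [cab sb]]] x [n ->]; exists (a + b * n), b; split; [|split].
- split; first by rewrite addn_gt0 a_gt0.
  by split => //; split => //; exact: coprime_arprog.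
- exact: arprog_self.
- by move=> y [m ->]; exists (n + m); rewrite mulnDr addnA.
Qed.

Lemma kclosure_mono (A B : pset) y :
  (forall w, A w -> B w) -> kclosure A y -> kclosure B y.
Proof.
move=> AB [y_gt0 cl]; split => // V oV Vy; have [w [Vw Aw]] := cl V oV Vy.
by exists w; split => //; exact: AB.
Qed.

Lemma kclosure_arprog_mod a b y p : kclosure (arprog a b) y -> prime p -> p %| b ->
  ~~ (p %| y) -> y = a %[mod p].
Proof.
move=> [y_gt0 cl] pp pb pNy.
have kb : kbase y p.
  split => //; split; first exact: prime_gt0.
  by split; [rewrite coprime_sym prime_coprime | exact: squarefree_prime].
have [_ [[n ->] [m wE]]] := cl _ (kopen_arprog kb) (arprog_self y p).
by rewrite -(modnDM_dvd y n (dvdnn p)) wE modnDM_dvd.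
Qed.

Lemma kclosure_arprog a b y : squarefree b -> 0 < y ->
  (forall p, prime p -> p %| b -> ~~ (p %| y) -> y = a %[mod p]) ->
  kclosure (arprog a b) y.
Proof.
move=> sb y_gt0 ya; split => // V oV Vy.
have [c [d [[_ [d_gt0 [cd _]]] [[n yE] cdV]]]] := oV y Vy.
have cyd : coprime y d by rewrite yE coprime_arprog.
have [b' [_ cdb' bb']] := squarefree_coprime_multiple (primes b) d.
(* At the primes of b dividing d, y = a already holds because y is prime to d;
   b' takes care of the other primes of b. *)
pose w0 := chinese d b' y a.
have w0a : w0 = a %[mod b].
  apply: eq_mod_squarefree => // p pp pb.
  have [pd | pNd] := boolP (p %| d).
    rewrite -(modn_dvdm w0 pd) chinese_modl // modn_dvdm //; apply: ya => //.
    by rewrite -prime_coprime // coprime_sym (coprime_dvdr pd cyd).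
  have pb' : p %| b' by apply: bb' => //; rewrite mem_primes pp squarefree_gt0.
  by rewrite -(modn_dvdm w0 pb') chinese_modr // modn_dvdm.
pose w := w0 + d * b * (y + a).
have w_ge : y + a <= w.
  by apply: leq_trans (leq_addl w0 _); rewrite leq_pmull // muln_gt0 d_gt0 squarefree_gt0.
exists w; split; last first.
  apply: arprog_of_mod; first exact: squarefree_gt0.
    exact: leq_trans (leq_addl y a) w_ge.
  by rewrite modnDM_dvd ?dvdn_mull.
apply/cdV/arprog_of_mod => //; first by apply: leq_trans w_ge; rewrite yE -addnA leq_addr.
by rewrite modnDM_dvd ?dvdn_mulr // chinese_modl // yE modnDM_dvd.
Qed.

Lemma kopen_closure U x : kopen U -> U x -> exists a b,
  [/\ coprime a b, squarefree b, arprog a b x &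
      forall y, 0 < y -> (forall p, prime p -> p %| b -> ~~ (p %| y) -> y = a %[mod p]) ->
      kclosure U y].
Proof.
move=> oU Ux; have [a [b [[_ [_ [cab sb]]] [xab abU]]]] := oU x Ux.
by exists a, b; split => // y y_gt0 ya; apply: kclosure_mono abU _; exact: kclosure_arprog.
Qed.

(** * The filters F_E and F_oo prime by prime *)

Lemma cat_witnesses (I : eqType) (L : seq I) (S : nat -> nat -> Prop) (R : I -> nat -> Prop) :
  (forall i, i \in L -> exists P : seq nat, forall y, (forall p, p \in P -> S p y) -> R i y) ->
  exists P : seq nat, forall y, (forall p, p \in P -> S p y) -> forall i, i \in L -> R i y.
Proof.
elim: L => [|i L IH] LR; first by exists [::].
have [P1 R1] := LR i (mem_head i L).
have [P2 R2] := IH (fun j jL => LR j (@mem_behead _ (i :: L) j jL)).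
exists (P1 ++ P2) => y Sy j; rewrite inE => /predU1P [-> | jL].
  by apply: R1 => p pP; apply: Sy; rewrite mem_cat pP.
by apply: R2 => // p pP; apply: Sy; rewrite mem_cat pP orbT.
Qed.

Definition adh (E : seq nat) p y :=
  p %| y \/ forall z, z \in E -> ~~ (p %| z) -> y = z %[mod p].

Lemma adh_mod E p y y' : y = y' %[mod p] -> adh E p y -> adh E p y'.
Proof.
move=> yy' [pdy | yE]; first by left; rewrite -(eq_mod_dvdn yy').
by right => z zE pNz; rewrite -yy' (yE z zE pNz).
Qed.

Lemma adh2 E y : adh E 2 y.
Proof.
case oy: (odd y); last by left; rewrite dvdn2 oy.
by right => z _; rewrite dvdn2 negbK => oz; rewrite !modn2 oy oz.
Qed.

Lemma FEP E B : all_pos E -> FE E B <->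
  subN B /\ exists P : seq nat,
    forall y, 0 < y -> (forall p, p \in P -> prime p -> adh E p y) -> B y.
Proof.
move=> Epos; split => [[sB [U [EU UB]]] | [sB [P PB]]]; split => //.
  have [P PU] : exists P : seq nat, forall y, (forall p, p \in P -> prime p -> adh E p y) ->
      forall x, x \in E -> 0 < y -> kclosure (U x) y.
    apply: cat_witnesses => x xE; have [oU Ux] := EU x xE.
    have [a [b [cab sb [n xE'] Ucl]]] := kopen_closure oU Ux.
    exists (primes b) => y Ey y_gt0; apply: Ucl => // p pp pb pNy.
    have xa : x = a %[mod p] by rewrite xE' modnDM_dvd.
    have pNx : ~~ (p %| x).
      by rewrite (eq_mod_dvdn xa) -prime_coprime // coprime_sym (coprime_dvdr pb cab).
    have pP : p \in primes b by rewrite mem_primes pp squarefree_gt0.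
    have [pdy | yE] := Ey p pP pp; first by rewrite pdy in pNy.
    by rewrite (yE x xE pNx).
  by exists P => y y_gt0 Ey; apply: UB => // x xE; exact: PU.
have [b bP] := choice (fun x b =>
  [/\ squarefree b, coprime x b & forall p, p \in P -> prime p -> ~~ (p %| x) -> p %| b])
  (squarefree_coprime_multiple P).
exists (fun x => arprog x (b x)); split.
  move=> x xE; have [sb cxb _] := bP x; split; last exact: arprog_self.
  apply: kopen_arprog; split; first exact: (allP Epos).
  by split; [exact: squarefree_gt0 | split].
move=> y y_gt0 Ecl; apply: PB => // p pP pp.
have [pdy | pNy] := boolP (p %| y); [by left | right] => z zE pNz.
have [_ _ Pb] := bP z.
exact: kclosure_arprog_mod (Ecl z zE) pp (Pb p pP pp pNz) pNy.
Qed.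

Lemma exists_mod_dvd p y0 (Q : seq nat) : prime p -> exists y,
  [/\ 0 < y, y = y0 %[mod p] & forall q, q \in Q -> prime q -> q != p -> q %| y].
Proof.
move=> pp; have [M [sM cpM QM]] := squarefree_coprime_multiple Q p.
exists (chinese p M y0 0 + p * M); split.
- by rewrite addn_gt0 muln_gt0 (prime_gt0 pp) (squarefree_gt0 sM) orbT.
- by rewrite modnDM_dvd // chinese_modl.
move=> q qQ qp qNp; apply: dvdn_trans (QM q qQ qp _) _; first by rewrite dvdn_prime2.
by rewrite /dvdn mulnC modnDM_dvd // chinese_modr // mod0n.
Qed.

Definition adh_le E D := forall p, prime p -> forall y, adh D p y -> adh E p y.

Lemma fle_FE E D : all_pos E -> all_pos D -> fle (FE E) (FE D) <-> adh_le E D.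
Proof.
move=> Epos Dpos; split => [le p pp y0 Dy0 | le B]; last first.
  move=> /(FEP _ Epos) [sB [P PB]]; apply/(FEP _ Dpos); split => //.
  by exists P => y y_gt0 Dy; apply: PB => // p pP pp; exact/le/Dy.
have /le /(FEP _ Dpos) [_ [Q QB]] : FE E (fun y => 0 < y /\ adh E p y).
  apply/(FEP _ Epos); split; first by move=> y [].
  by exists [:: p] => y y_gt0 Ey; split => //; apply: Ey; rewrite ?inE.
have [y [y_gt0 yy0 Qy]] := exists_mod_dvd y0 Q pp.
have [_ Ey] : 0 < y /\ adh E p y.
  apply: QB y_gt0 _ => q qQ qp.
  by have [-> | qNp] := eqVneq q p; [exact: adh_mod (esym yy0) Dy0 | left; exact: Qy].
exact: adh_mod yy0 Ey.
Qed.

Definition pfull E p := forall y, adh E p y.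
Definition pnull E p := forall y, adh E p y -> p %| y.
Definition odd_pnull E := forall p, prime p -> odd p -> pnull E p.

Lemma not_pnullP E p : ~ pnull E p <-> exists y, adh E p y /\ ~~ (p %| y).
Proof.
split => [Enp | [y [Ey pNy]] Ep]; last by rewrite (Ep y Ey) in pNy.
by apply: NNPP => noy; apply: Enp => y Ey; apply/negPn/negP => pNy; apply: noy; exists y.
Qed.

Lemma not_odd_pnullP E : ~ odd_pnull E -> exists p, [/\ prime p, odd p & ~ pnull E p].
Proof.
move=> Enn; apply: NNPP => nop; apply: Enn => p pp op.
by apply: NNPP => Enp; apply: nop; exists p.
Qed.

Lemma pfull_pnull E p : prime p -> pfull E p -> ~ pnull E p.
Proof. by move=> pp Ef /(_ 1 (Ef 1)); rewrite dvdn1 => /eqP p1; rewrite p1 in pp. Qed.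

Lemma adh_le_pnull E D p : adh_le E D -> prime p -> pnull E p -> pnull D p.
Proof. by move=> le pp Ep y /(le p pp) /Ep. Qed.

Lemma adh_le_pfull E D p : adh_le E D -> prime p -> pfull D p -> pfull E p.
Proof. by move=> le pp Df y; exact: le. Qed.

Lemma adh_mid_eq E D p : ~ pfull E p -> ~ pnull D p ->
  (forall y, adh D p y -> adh E p y) -> forall y, adh E p y -> adh D p y.
Proof.
move=> Enf /not_pnullP [y0 [Dy0 pNy0]] DE y [pdy | Ey]; first by left.
have [z [zE pNz]] : exists z, z \in E /\ ~~ (p %| z).
  apply: NNPP => noz; apply: Enf => y'; right => z zE pNz.
  by case: noz; exists z.
have [pdy0 | Ey0] := DE y0 Dy0; first by rewrite pdy0 in pNy0.
by apply: adh_mod Dy0; rewrite (Ey0 z zE pNz) (Ey z zE pNz).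
Qed.

Lemma adh_le_converse E D : adh_le E D ->
  (forall p, prime p -> odd p -> [\/ pnull E p, pfull D p | ~ pfull E p /\ ~ pnull D p]) ->
  adh_le D E.
Proof.
move=> le types p pp y Ey; case: (even_prime pp) => [-> | op]; first exact: adh2.
case: (types p pp op) => [Ep | Df | [Enf Dnn]]; [by left; exact: Ep | exact: Df |].
exact: adh_mid_eq Enf Dnn (le p pp) y Ey.
Qed.

Lemma not_forall_dvd_or_eq_mod p k : prime p -> odd p ->
  ~ (forall y, p %| y \/ y = k %[mod p]).
Proof.
move=> pp op yk; have p_gt2 := odd_prime_gt2 op pp.
have eqk y : 0 < y < p -> y = k %[mod p].
  by move=> /andP [y_gt0 y_lt]; case: (yk y) => // /(dvdn_leq y_gt0); rewrite leqNgt y_lt.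
by have := etrans (eqk 1 (ltnW p_gt2)) (esym (eqk 2 p_gt2)); rewrite !modn_small // ltnW.
Qed.

Lemma PiE_pfull E p : prime p -> odd p -> PiE E p <-> pfull E p.
Proof.
move=> pp op; split => [[_ Ep] y | Ef]; first by right => z /Ep ->.
split => // z zE; apply/negPn/negP => pNz.
apply: (not_forall_dvd_or_eq_mod (k := z) pp op) => y.
by case: (Ef y) => [pdy | yE]; [left | right; exact: yE].
Qed.

Lemma AE_not_pnull E p : prime p -> AE E p <-> ~ pnull E p.
Proof.
move=> pp; split => [[_ [k [k_gt0 Ek]]] | /not_pnullP [y [Ey pNy]]].
  apply/not_pnullP.
  have kE z : z \in E -> ~~ (p %| z) -> k = z %[mod p].
    by move=> zE pNz; case: (Ek z zE) => [pz | ->] //; rewrite pz in pNz.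
  have [pk | pNk] := boolP (p %| k); last by exists k; split => //; right.
  exists 1; split; last by rewrite dvdn1 gtn_eqF ?prime_gt1.
  by right => z zE pNz; have := pNz; rewrite -(eq_mod_dvdn (kE z zE pNz)) pk.
split => //; exists y; split; first by case: y pNy {Ey} => //; rewrite dvdn0.
move=> z zE; have [pz | pNz] := boolP (p %| z); [by left | right].
by case: Ey pNy => [-> // | yE _]; rewrite (yE z zE pNz).
Qed.

Lemma AE2 E : AE E 2.
Proof. by apply/(AE_not_pnull E (isT : prime 2)) => /(_ 1 (adh2 E 1)). Qed.

Definition ap3 k m := [:: k; k + m; k + m + m].

Lemma ap3_pos k m : 0 < k -> all_pos (ap3 k m).
Proof. by move=> k_gt0; rewrite /= !addn_gt0 k_gt0. Qed.

Lemma ap3_mod k m r z : r %| m -> z \in ap3 k m -> z = k %[mod r].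
Proof.
move=> rm; rewrite !inE; case/or3P => /eqP ->;
  [by [] | rewrite -(muln1 m) | rewrite -addnA addnn -muln2]; exact: modnDM_dvd.
Qed.

Lemma adh_ap3 k m r y : prime r -> r %| m -> ~~ (r %| k) ->
  adh (ap3 k m) r y <-> r %| y \/ y = k %[mod r].
Proof.
move=> rp rm rNk; split => [[pdy | yE] | [pdy | yk]]; [by left | right | by left | right].
  exact: yE (mem_head _ _) rNk.
by move=> z /(ap3_mod rm) -> _.
Qed.

Lemma pnull_of_incongruent E r z1 z2 : z1 \in E -> z2 \in E ->
  ~~ (r %| z1) -> ~~ (r %| z2) -> z1 != z2 %[mod r] -> pnull E r.
Proof.
move=> z1E z2E rNz1 rNz2 + y [// | yE].
by rewrite -(yE _ z1E rNz1) (yE _ z2E rNz2) eqxx.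
Qed.

Lemma addn_neq_mod u m r : ~~ (r %| m) -> u != u + m %[mod r].
Proof. by rewrite -{1}(addn0 u) eqn_modDl mod0n eq_sym. Qed.

Lemma ap3_pnull k m r : prime r -> odd r -> ~~ (r %| m) -> pnull (ap3 k m) r.
Proof.
move=> rp ro rNm; have rN2m : ~~ (r %| m + m) by rewrite addnn -muln2 Gauss_dvdl // coprimen2.
have mem1 : k \in ap3 k m by rewrite inE eqxx.
have mem2 : k + m \in ap3 k m by rewrite !inE eqxx orbT.
have mem3 : k + m + m \in ap3 k m by rewrite !inE eqxx !orbT.
have [rk | rNk] := boolP (r %| k).
  have rNkm : ~~ (r %| k + m) by rewrite dvdn_addr.
  apply: (pnull_of_incongruent mem2 mem3 rNkm); first by rewrite -addnA dvdn_addr.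
  exact: addn_neq_mod.
have [rkm | rNkm] := boolP (r %| k + m).
  apply: (pnull_of_incongruent mem1 mem3 rNk); first by rewrite dvdn_addr.
  by rewrite -addnA; exact: addn_neq_mod.
exact: pnull_of_incongruent mem1 mem2 rNk rNkm (addn_neq_mod _ rNm).
Qed.

Lemma ap3_mid k m r : prime r -> odd r -> r %| m -> ~~ (r %| k) ->
  ~ pfull (ap3 k m) r /\ ~ pnull (ap3 k m) r.
Proof.
move=> rp ro rm rNk; split.
  move=> full; apply: (not_forall_dvd_or_eq_mod (k := k) rp ro) => y.
  exact/(adh_ap3 _ rp rm rNk).
by apply/not_pnullP; exists k; split => //; apply/(adh_ap3 _ rp rm rNk); right.
Qed.

Lemma adh_le_ap3 E k m : coprime k m ->
  (forall r, prime r -> odd r -> r %| m -> adh E r k) -> adh_le E (ap3 k m).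
Proof.
move=> ckm Ek r rp y; case: (even_prime rp) => [-> _ | ro]; first exact: adh2.
have [rm | rNm] := boolP (r %| m); last by move=> /(ap3_pnull (k := k) rp ro rNm) ?; left.
have rNk : ~~ (r %| k) by rewrite -prime_coprime // coprime_sym (coprime_dvdr rm ckm).
by move=> /(adh_ap3 _ rp rm rNk) [? | yk]; [left | exact: adh_mod (esym yk) (Ek r rp ro rm)].
Qed.

Lemma FinfP B : Finf B <-> subN B /\
  exists P : seq nat, forall y, 0 < y -> (forall p, p \in P -> prime p -> odd p -> p %| y) -> B y.
Proof.
split => [[sB [n [U [_ [HU UB]]]]] | [sB [P PB]]]; split => //.
  have [P PU] : exists P : seq nat, forall y, (forall p, p \in P -> prime p -> odd p -> p %| y) ->
      forall i, i \in iota 0 n -> 0 < y -> kclosure (U i) y.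
    apply: cat_witnesses => i; rewrite mem_iota leq0n add0n => /HU [oU [z Uz]].
    have [a [b [cab sb _ Ucl]]] := kopen_closure oU Uz.
    exists (primes b) => y yP y_gt0; apply: Ucl => // p pp pb pNy.
    have pP : p \in primes b by rewrite mem_primes pp squarefree_gt0.
    case: (even_prime pp) => [p2 | op]; last by rewrite (yP p pP pp op) in pNy.
    subst p; move: pNy; rewrite dvdn2 negbK => oy.
    have : coprime a 2 by exact: coprime_dvdr pb cab.
    by rewrite coprimen2 => oa; rewrite !modn2 oy oa.
  by exists P => y y_gt0 yP; apply: UB => // i i_lt; apply: PU; rewrite ?mem_iota.
have [b [sb c2b Pb]] := squarefree_coprime_multiple P 2.
exists 2, (fun i => arprog i.+1 b); split => //; split.
  move=> i i_lt; split; last by exists i.+1; exact: arprog_self.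
  apply: kopen_arprog; split => //; split; first exact: squarefree_gt0.
  by split => //; case: i i_lt => [|[|//]] _; [exact: coprime1n |].
move=> y y_gt0 cl; apply: PB => // p pP pp op; apply/negPn/negP => pNy.
have p_gt2 := odd_prime_gt2 op pp.
have pb : p %| b by apply: Pb => //; rewrite dvdn_prime2 // gtn_eqF.
(* The closures of 1 + bN and 2 + bN would force y = 1 = 2 (mod p). *)
have := kclosure_arprog_mod (cl 0 isT) pp pb pNy.
by rewrite (kclosure_arprog_mod (cl 1 isT) pp pb pNy) !modn_small // ltnW.
Qed.

Lemma adh_ap3_11 p y : prime p -> adh (ap3 1 1) p y <-> (odd p -> p %| y).
Proof.
move=> pp; case: (even_prime pp) => [-> | op]; first by split => // _; exact: adh2.
have pN1 : ~~ (p %| 1) by rewrite dvdn1 gtn_eqF ?prime_gt1.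
by split => [/(ap3_pnull pp op pN1) | /(_ op) pdy]; [| left].
Qed.

Lemma feq_Finf_ap3 : feq Finf (FE (ap3 1 1)).
Proof.
have pos : all_pos (ap3 1 1) by [].
split => B.
  move=> /FinfP [sB [P PB]]; apply/(FEP _ pos); split => //.
  by exists P => y y_gt0 yP; apply: PB => // p pP pp; apply/(adh_ap3_11 _ pp)/yP.
move=> /(FEP _ pos) [sB [P PB]]; apply/FinfP; split => //.
by exists P => y y_gt0 yP; apply: PB => // p pP pp; apply/(adh_ap3_11 _ pp)/yP.
Qed.

Lemma feq_FE_Finf E : all_pos E -> feq (FE E) Finf <-> odd_pnull E.
Proof.
move=> Epos; have pos : all_pos (ap3 1 1) by [].
have [F_ap3 ap3_F] := feq_Finf_ap3.
split => [[_ Finf_E] p pp op y Ey | Enull].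
  have /(fle_FE pos Epos) le : fle (FE (ap3 1 1)) (FE E) by move=> B /ap3_F /Finf_E.
  exact: (proj1 (adh_ap3_11 y pp)) (le p pp y Ey) op.
have E_le : adh_le E (ap3 1 1).
  move=> p pp y /(adh_ap3_11 _ pp) yp.
  by case: (even_prime pp) => [-> | op]; [exact: adh2 | left; exact: yp].
have le_E : adh_le (ap3 1 1) E.
  by move=> p pp y Ey; apply/(adh_ap3_11 _ pp) => op; exact: Enull.
split => B; first by move/(proj2 (fle_FE Epos pos) E_le)/ap3_F.
by move/F_ap3/(proj2 (fle_FE pos Epos) le_E).
Qed.

(** * Maximal elements *)

Lemma feq_refl F : feq F F.
Proof. by split. Qed.

Lemma feq_sym F G : feq F G -> feq G F.
Proof. by case. Qed.

Lemma feq_trans F G H : feq F G -> feq G H -> feq F H.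
Proof. by move=> [FG GF] [GH HG]; split => B; [move/FG/GH | move/HG/GF]. Qed.

Lemma flt_feq G G' H H' : feq G G' -> feq H H' -> flt G H -> flt G' H'.
Proof.
move=> [_ G'G] [HH' H'H] [GH nHG]; split => [B /G'G /GH /HH' // | H'G'].
by apply: nHG => B /HH' /H'G' /G'G.
Qed.

Lemma flt_FE E D : all_pos E -> all_pos D ->
  flt (FE E) (FE D) <-> adh_le E D /\ ~ adh_le D E.
Proof.
move=> Epos Dpos; split => [[le nle] | [le nle]]; split.
- exact/(fle_FE Epos Dpos).
- by move/(fle_FE Dpos Epos).
- exact/(fle_FE Epos Dpos).
- by move/(fle_FE Dpos Epos).
Qed.

Lemma inFrak_FE E : all_pos E -> inFrak (FE E).
Proof. by move=> Epos; left; exists E; split => //; exact: feq_refl. Qed.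

Lemma inFrak_notFinf_FE H : inFrak H -> ~ feq H Finf ->
  exists D, [/\ all_pos D, feq H (FE D) & ~ odd_pnull D].
Proof.
case=> [[D [Dpos HD]] HF | //]; exists D; split => // /(feq_FE_Finf Dpos) DF.
exact/HF/(feq_trans HD DF).
Qed.

Lemma Frak1_feq G G' : feq G G' -> Frak1 G -> Frak1 G'.
Proof.
move=> GG' [iG [nG maxG]]; split; [|split].
- case: iG => [[E [Epos GE]] | GF]; [left; exists E; split => // | right];
    exact: feq_trans (feq_sym GG') _.
- by move=> G'F; apply: nG; exact: feq_trans GG' G'F.
- move=> H iH nH lt; apply: (maxG H iH nH).
  by apply: flt_feq lt; [exact: feq_sym | exact: feq_refl].
Qed.

Lemma FE_maximalP E (P : filt -> Prop) : all_pos E ->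
  (forall G G', feq G G' -> P G -> P G') ->
  (forall H, inFrak H -> ~ feq H Finf -> P H -> ~ flt (FE E) H) <->
  (forall D, all_pos D -> ~ odd_pnull D -> P (FE D) -> adh_le E D -> adh_le D E).
Proof.
move=> Epos Pinv; split => [max D Dpos Dnn PD le | max H iH nH PH lt].
  apply: NNPP => nle; apply: (max (FE D)) => //.
  - exact: inFrak_FE.
  - by move/(feq_FE_Finf Dpos).
  - exact/(flt_FE Epos Dpos).
have [D [Dpos HD Dnn]] := inFrak_notFinf_FE iH nH.
have /(flt_FE Epos Dpos) [le nle] := flt_feq (feq_refl _) HD lt.
by apply: nle; exact: max Dpos Dnn (Pinv _ _ HD PH) le.
Qed.

Definition single_mid E := exists p, [/\ prime p, odd p, ~ pfull E p, ~ pnull E p &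
  forall q, prime q -> odd q -> q <> p -> pnull E q].

Definition single_full E := exists p, [/\ prime p, odd p, pfull E p &
  forall q, prime q -> odd q -> q <> p -> pnull E q].

Definition double_mid E := exists p q, [/\ prime p, prime q, odd p, odd q & p <> q] /\
  [/\ ~ pfull E p, ~ pnull E p, ~ pfull E q, ~ pnull E q &
      forall r, prime r -> odd r -> r <> p -> r <> q -> pnull E r].

Definition second_layer E := single_full E \/ double_mid E.

Lemma single_mid_maximal E D : single_mid E -> ~ odd_pnull D -> adh_le E D -> adh_le D E.
Proof.
move=> [p [pp op Enf _ Eq]] Dnn le; apply: (adh_le_converse le) => r rp ro.
have [-> | /eqP rNp] := eqVneq r p; last by apply: Or31; exact: Eq.
apply: Or33; split => // Dp; apply: Dnn => s sp so.
have [-> // | /eqP sNp] := eqVneq s p; exact: adh_le_pnull le sp (Eq s sp so sNp).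
Qed.

Lemma maximal_single_mid E : ~ odd_pnull E ->
  (forall D, all_pos D -> ~ odd_pnull D -> adh_le E D -> adh_le D E) -> single_mid E.
Proof.
move=> /not_odd_pnullP [p [pp op Enp]] max.
have [y0 [Ey0 pNy0]] := proj1 (not_pnullP _ _) Enp.
have y0_gt0 : 0 < y0 by case: y0 pNy0 {Ey0} => //; rewrite dvdn0.
have [Dnf Dnn] := ap3_mid pp op (dvdnn p) pNy0.
have le : adh_le E (ap3 y0 p).
  apply: adh_le_ap3 => [|r rp ro]; first by rewrite coprime_sym prime_coprime.
  by rewrite dvdn_prime2 // => /eqP ->.
have ge := max _ (ap3_pos p y0_gt0) (fun D => Dnn (D p pp op)) le.
exists p; split => //; first by move/(adh_le_pfull ge pp).
move=> q qp oq qNp; have qNdp : ~~ (q %| p) by rewrite dvdn_prime2 //; apply/eqP.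
exact: adh_le_pnull ge qp (ap3_pnull qp oq qNdp).
Qed.

Lemma Frak1_FE E : all_pos E -> Frak1 (FE E) <-> single_mid E.
Proof.
move=> Epos; have maxP := FE_maximalP (P := fun _ => True) Epos (fun _ _ _ _ => I).
split => [[_ [EF max]] | Emid].
  apply: maximal_single_mid; first by move/(feq_FE_Finf Epos).
  by move=> D Dpos Dnn; apply: (proj1 maxP) => // H iH nH _; exact: max.
split; first exact: inFrak_FE.
split.
  move/(feq_FE_Finf Epos) => Enull; have [p [pp op _ Enp _]] := Emid.
  exact: Enp (Enull p pp op).
move=> H iH nH; apply: (proj2 maxP) iH nH I => D _ Dnn _; exact: single_mid_maximal.
Qed.

Lemma not_pnull_pair D p q : q <> p -> prime q -> odd q ->
  ~ odd_pnull D -> ~ single_mid D -> ~ pfull D q ->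
  (forall r, prime r -> odd r -> r <> p -> r <> q -> pnull D r) -> ~ pnull D p.
Proof.
move=> qNp qp oq Dnn Dns Dqf Dr Dp; have [Dq | Dqn] := classic (pnull D q).
  apply: Dnn => r rp ro; have [-> // | /eqP rNp] := eqVneq r p.
  by have [-> // | /eqP rNq] := eqVneq r q; exact: Dr.
apply: Dns; exists q; split => // r rp ro rNq.
by have [-> // | /eqP rNp] := eqVneq r p; exact: Dr.
Qed.

Lemma second_layer_maximal E D : second_layer E ->
  ~ odd_pnull D -> ~ single_mid D -> adh_le E D -> adh_le D E.
Proof.
move=> [[p [pp op Ef Eq]] | [p [q [[pp qp op oq pNq] [Epf _ Eqf _ Er]]]]] Dnn Dns le.
  apply: (adh_le_converse le) => r rp ro.
  have [-> | /eqP rNp] := eqVneq r p; last by apply: Or31; exact: Eq.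
  apply: Or32; apply: NNPP => Dpf; apply: Dns; exists p; split => //.
    move=> Dp; apply: Dnn => s sp so; have [-> // | /eqP sNp] := eqVneq s p.
    exact: adh_le_pnull le sp (Eq s sp so sNp).
  by move=> s sp so sNp; exact: adh_le_pnull le sp (Eq s sp so sNp).
have Dr r : prime r -> odd r -> r <> p -> r <> q -> pnull D r.
  by move=> rp ro rNp rNq; exact: adh_le_pnull le rp (Er r rp ro rNp rNq).
have Dpf : ~ pfull D p by move/(adh_le_pfull le pp).
have Dqf : ~ pfull D q by move/(adh_le_pfull le qp).
have Dpn := not_pnull_pair (nesym pNq) qp oq Dnn Dns Dqf Dr.
have Dqn := not_pnull_pair pNq pp op Dnn Dns Dpf (fun r rp ro rNq rNp => Dr r rp ro rNp rNq).
apply: (adh_le_converse le) => r rp ro.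
have [-> | /eqP rNp] := eqVneq r p; first by apply: Or33.
have [-> | /eqP rNq] := eqVneq r q; first by apply: Or33.
by apply: Or31; exact: Er.
Qed.

Lemma adh_le_ap3_pair E p q : prime p -> prime q -> p <> q ->
  ~ pnull E p -> ~ pnull E q ->
  exists k, [/\ 0 < k, ~~ (p %| k), ~~ (q %| k) & adh_le E (ap3 k (p * q))].
Proof.
move=> pp qp pNq /not_pnullP [y0 [Ey0 pNy0]] /not_pnullP [y1 [Ey1 qNy1]].
have cpq : coprime p q by rewrite prime_coprime // dvdn_prime2 //; apply/eqP.
pose k := chinese p q y0 y1 + p * q.
have kp : k = y0 %[mod p] by rewrite modnDM_dvd // chinese_modl.
have kq : k = y1 %[mod q] by rewrite /k mulnC modnDM_dvd // chinese_modr.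
have pNk : ~~ (p %| k) by rewrite (eq_mod_dvdn kp).
have qNk : ~~ (q %| k) by rewrite (eq_mod_dvdn kq).
exists k; split => //; first by rewrite addn_gt0 muln_gt0 (prime_gt0 pp) (prime_gt0 qp) orbT.
apply: adh_le_ap3 => [|r rp _].
  by rewrite coprimeMr !(coprime_sym k) !prime_coprime ?pNk.
rewrite Euclid_dvdM // !dvdn_prime2 // => /orP [/eqP -> | /eqP ->].
  exact: adh_mod (esym kp) Ey0.
exact: adh_mod (esym kq) Ey1.
Qed.

Lemma maximal_second_layer E : ~ odd_pnull E -> ~ single_mid E ->
  (forall D, all_pos D -> ~ odd_pnull D -> ~ single_mid D -> adh_le E D -> adh_le D E) ->
  second_layer E.
Proof.
move=> /not_odd_pnullP [p [pp op Enp]] Ens max.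
have [[q [qp oq qNp Enq]] | noq] :=
  classic (exists q, [/\ prime q, odd q, q <> p & ~ pnull E q]); last first.
  have Eq q : prime q -> odd q -> q <> p -> pnull E q.
    by move=> qp oq qNp; apply: NNPP => Enq; apply: noq; exists q.
  left; exists p; split => //; apply: NNPP => Epf; apply: Ens; exists p; split => //.
have [k [k_gt0 pNk qNk le]] := adh_le_ap3_pair pp qp (nesym qNp) Enp Enq.
have [Dpf Dpn] := ap3_mid pp op (dvdn_mulr q (dvdnn p)) pNk.
have [Dqf Dqn] := ap3_mid qp oq (dvdn_mull p (dvdnn q)) qNk.
have Dr r : prime r -> odd r -> r <> p -> r <> q -> pnull (ap3 k (p * q)) r.
  move=> rp ro rNp rNq; apply: ap3_pnull => //.
  by rewrite Euclid_dvdM // !dvdn_prime2 //; apply/norP; split; apply/eqP.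
have ge : adh_le (ap3 k (p * q)) E.
  apply: max le; first exact: ap3_pos.
    by move=> Dnull; exact: Dpn (Dnull p pp op).
  move=> [r [rp ro _ Drn Dr']]; have [rE | /eqP rNp] := eqVneq r p.
    by subst r; exact: Dqn (Dr' q qp oq qNp).
  exact: Dpn (Dr' p pp op (nesym rNp)).
right; exists p, q; split; first by split => //; exact: nesym qNp.
split => //.
- by move/(adh_le_pfull ge pp).
- by move/(adh_le_pfull ge qp).
- by move=> r rp ro rNp rNq; exact: adh_le_pnull ge rp (Dr r rp ro rNp rNq).
Qed.

Lemma second_layer_not_single_mid E : second_layer E -> ~ single_mid E.
Proof.
move=> [[p [pp op Ef Eq]] | [p [q [[pp qp op oq pNq] [_ Epn _ Eqn _]]]]] [s [sp so Esf Esn Es]].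
  have [sp' | /eqP sNp] := eqVneq s p; first by subst s.
  exact: pfull_pnull pp Ef (Es p pp op (nesym sNp)).
have [sp' | /eqP sNp] := eqVneq s p; last exact: Epn (Es p pp op (nesym sNp)).
by subst s; exact: Eqn (Es q qp oq (nesym pNq)).
Qed.

Lemma second_layer_not_odd_pnull E : second_layer E -> ~ odd_pnull E.
Proof.
move=> [[p [pp op Ef _]] | [p [q [[pp _ op _ _] [_ Epn _ _ _]]]]] Enull.
  exact: pfull_pnull pp Ef (Enull p pp op).
exact: Epn (Enull p pp op).
Qed.

Lemma Frak2_FE E : all_pos E -> Frak2 (FE E) <-> second_layer E.
Proof.
move=> Epos.
have Frak1_inv G G' : feq G G' -> ~ Frak1 G -> ~ Frak1 G'.
  by move=> GG' nG /(Frak1_feq (feq_sym GG')).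
have maxP := FE_maximalP Epos Frak1_inv.
split => [[_ [EF [E1 max]]] | Etype].
  apply: maximal_second_layer; [by move/(feq_FE_Finf Epos) | by move/(Frak1_FE Epos) |].
  by move=> D Dpos Dnn Dns; apply: (proj1 maxP) => //; move/(Frak1_FE Dpos).
split; first exact: inFrak_FE.
split; first by move/(feq_FE_Finf Epos); exact: second_layer_not_odd_pnull.
split; first by move/(Frak1_FE Epos); exact: second_layer_not_single_mid.
move=> H iH nH H1; apply: (proj2 maxP) iH nH H1 => D Dpos Dnn D1.
by apply: second_layer_maximal Etype Dnn _; move/(Frak1_FE Dpos).
Qed.

Lemma AE_odd_support E (S : nat -> Prop) : (forall r, S r -> prime r /\ odd r) ->
  (forall r, AE E r <-> r = 2 \/ S r) <-> (forall r, prime r -> odd r -> ~ pnull E r <-> S r).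
Proof.
move=> Sodd; split => [AS r rp ro | SA r].
  apply: iff_trans (iff_sym (AE_not_pnull E rp)) _; apply: iff_trans (AS r) _.
  by split => [[r2 | //] | Sr]; [rewrite r2 in ro | right].
split => [Ar | [-> | Sr]]; last 2 first.
- exact: AE2.
- by have [rp ro] := Sodd r Sr; apply/(AE_not_pnull E rp)/(SA r rp ro).
have [rp _] := Ar; case: (even_prime rp) => [-> | ro]; [by left | right].
by apply/(SA r rp ro)/(AE_not_pnull E rp).
Qed.

Lemma single_full_PiE_AE E : single_full E <->
  exists p, prime p /\ odd p /\ PiE E p /\ (forall r, AE E r <-> (r = 2 \/ r = p)).
Proof.
have Sodd p : prime p -> odd p -> forall r, r = p -> prime r /\ odd r by move=> pp op r ->.
split => [[p [pp op Ef Eq]] | [p [pp [op [Pp AS]]]]].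
  exists p; do 3!split => //; first exact/(PiE_pfull E pp op).
  apply: (proj2 (AE_odd_support E (Sodd p pp op))) => r rp ro; split => [Enr | ->].
    by apply: NNPP => rNp; apply: Enr; exact: Eq.
  exact: pfull_pnull pp Ef.
have SA := proj1 (AE_odd_support E (Sodd p pp op)) AS.
exists p; split => //; first exact/(PiE_pfull E pp op).
by move=> q qp oq qNp; apply: NNPP => /(SA q qp oq).
Qed.

Lemma double_mid_PiE_AE E : double_mid E <->
  exists p q, prime p /\ prime q /\ odd p /\ odd q /\ p <> q /\
    (forall r, AE E r <-> (r = 2 \/ r = p \/ r = q)) /\ (forall r, PiE E r -> r = 2).
Proof.
have Sodd p q : prime p -> prime q -> odd p -> odd q ->
    forall r, r = p \/ r = q -> prime r /\ odd r by move=> pp qp op oq r [->|->].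
split => [[p [q [[pp qp op oq pNq] [Epf Epn Eqf Eqn Er]]]] |
          [p [q [pp [qp [op [oq [pNq [AS Pi2]]]]]]]]].
  exists p, q; do 5!split => //; split.
    apply: (proj2 (AE_odd_support E (Sodd p q pp qp op oq))) => r rp ro.
    split => [Enr | [->|->] //].
    by apply: NNPP => /not_or_and [rNp rNq]; apply: Enr; exact: Er.
  move=> r Pr; have [rp _] := Pr; case: (even_prime rp) => [// | ro]; exfalso.
  have Ef := proj1 (PiE_pfull E rp ro) Pr.
  have [e | /eqP rNp] := eqVneq r p; first by subst r.
  have [e | /eqP rNq] := eqVneq r q; first by subst r.
  exact: pfull_pnull rp Ef (Er r rp ro rNp rNq).
have SA := proj1 (AE_odd_support E (Sodd p q pp qp op oq)) AS.
have not_pfull s : prime s -> odd s -> ~ pfull E s.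
  by move=> sp so /(PiE_pfull E sp so) /Pi2 s2; rewrite s2 in so.
exists p, q; split => //; split; [exact: not_pfull | | exact: not_pfull | |].
- by apply/(SA p pp op); left.
- by apply/(SA q qp oq); right.
- by move=> r rp ro rNp rNq; apply: NNPP => /(SA r rp ro) [].
Qed.

Theorem lemma3p12 (E : seq nat) :
  E <> [::] -> all (fun x => 0 < x) E ->
  (Frak2 (FE E) <->
   (exists p, prime p /\ odd p /\ PiE E p /\
      (forall r, AE E r <-> (r = 2 \/ r = p))) \/
   (exists p q, prime p /\ prime q /\ odd p /\ odd q /\ p <> q /\
      (forall r, AE E r <-> (r = 2 \/ r = p \/ r = q)) /\
      (forall r, PiE E r -> r = 2))).
Proof.
move=> _ Epos; apply: iff_trans (Frak2_FE Epos) _.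
split => [[/single_full_PiE_AE | /double_mid_PiE_AE] | [/single_full_PiE_AE | /double_mid_PiE_AE]];
  by [left | right].
Qed.
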